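(* Let $R$, $G$, $*$, $\sigma$ and $\mathcal{S}$ be as in the context, and suppose $\mathcal{S}$ is anticommutative. Let $x,y\in G\setminus G_*$ with $\sigma(y)\neq -1$. Then one of the following holds: - (i) $xy=yx=x^*y^*=y^*x^*$ and $2(1+\sigma(xy))=0=2(\sigma(x)+\sigma(y))$; - (ii) $xy=yx^*=y^*x=x^*y^*$ and $1+\sigma(x)+\sigma(y)+\sigma(xy)=0$; - (iii) $xy=x^*y^*\neq yx^*=y^*x$, $\sigma(xy)=-1$ and $\sigma(x)=-\sigma(y)$; - (iv) $xy=yx^*\neq x^*y^*=y^*x$ and $\sigma(x)=-1$.
   Context: Throughout, $R$ is a commutative ring with unity with $\operatorname{char}(R)\neq 2$, and $\mathcal{U}(R)$ is its unit group. $G$ is a group with an involution $*$, i.e. a map $x\mapsto x^*$ with $(xy)^*=y^*x^*$ and $(x^* )^*=x$. The map $\sigma:G\to\mathcal{U}(R)$ is a nontrivial group homomorphism with kernel $N=\ker\sigma$, and it is compatible with $*$: $xx^*\in N$ for all $x\in G$. The group ring $RG$ carries the involution $\left(\sum_{x\in G}\alpha_x x\right)^{\sigma*}=\sum_{x\in G}\sigma(x)\alpha_x x^*$. Write $G_*=\{x\in G: x^*=x\}$ and $N_*=G_*\cap N$. Let $\mathcal{S}$ be the $R$-submodule of $RG$ spanned by the union of the following three sets: - $2\mathcal{S}_1=\{2x: x\in N_*\}$; - $\mathcal{S}_2=\{\alpha x: x\in G_*\setminus N,\ \alpha\in R,\ \alpha(1-\sigma(x))=0\}$; - $\mathcal{S}_3=\{x+\sigma(x)x^*: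 x\in G\setminus G_*\}$. $\mathcal{S}$ is called anticommutative if $ab+ba=0$ for all $a,b\in\mathcal{S}$. *)

From HB Require Import structures.
From mathcomp Require Import all_boot all_order all_algebra.
Set Implicit Arguments. Unset Strict Implicit. Unset Printing Implicit Defensive.
Import GRing.Theory.
Local Open Scope ring_scope.

(* Elements of the group ring RG (G any group, possibly infinite) are
   represented by finite formal sums: lists of pairs (coefficient, group
   element).  Two representatives denote the same element of RG iff their
   coefficient functions [gcoef] agree. *)
Section GroupRing.
Variables (R : comNzRingType) (G : groupType).

Definition gelt := seq (R * G).

Definition gcoef (a : gelt) (g : G) : R := \sum_(p <- a | p.2 == g) p.1.

Definition gadd (a b : gelt) : gelt := a ++ b.

Definition gmul (a b : gelt) : gelt :=
  [seq (p.1 * q.1, (p.2 * q.2)%g) | p <- a, q <- b].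

Definition gscale (r : R) (a : gelt) : gelt := [seq (r * p.1, p.2) | p <- a].

Definition Gsym (star : G -> G) (x : G) : Prop := star x = x.
Definition inN (sigma : G -> R) (x : G) : Prop := sigma x = 1.

Definition S_gen (star : G -> G) (sigma : G -> R) (s : gelt) : Prop :=
  (exists x, Gsym star x /\ inN sigma x /\ s = [:: (2%:R, x)])
  \/ (exists x (al : R), Gsym star x /\ ~ inN sigma x /\
        al * (1 - sigma x) = 0 /\ s = [:: (al, x)])
  \/ (exists x, ~ Gsym star x /\ s = [:: (1, x); (sigma x, star x)]).

Definition in_S (star : G -> G) (sigma : G -> R) (a : gelt) : Prop :=
  exists ls : seq (R * gelt),
    (forall p, p \in ls -> S_gen star sigma p.2) /\
    (forall g, gcoef a g = gcoef (flatten [seq gscale p.1 p.2 | p <- ls]) g).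

Definition S_anticomm (star : G -> G) (sigma : G -> R) : Prop :=
  forall a b, in_S star sigma a -> in_S star sigma b ->
    forall g, gcoef (gadd (gmul a b) (gmul b a)) g = 0.

End GroupRing.

From HB Require Import structures.
From mathcomp Require Import all_boot all_order all_algebra.
From mathcomp Require Import ring.
Set Implicit Arguments. Unset Strict Implicit. Unset Printing Implicit Defensive.
Import GRing.Theory.
Local Open Scope ring_scope.

(* Write a = x + sigma(x) x^* and b = y + sigma(y) y^*; both lie in S, so the
   coefficient of every group element in ab + ba vanishes.  For a = b this
   gives x^* x = x x^*, x^* x^* = x x and 4 = 0.  The four products of ab
   (resp. ba) are pairwise distinct except for the coincidences
   xy = x^*y^* <-> xy^* = x^*y <-> yx^* = y^*x <-> yx = y^*x^*, and splitting
   on these and reading off coefficients yields (i)-(iv).  The remaining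
   configurations produce a symmetric w with 2w in S, namely w = xy with
   sigma(w) = -1 or w = yy^*, such that xw differs from wx and wx^*; then the
   coefficient of xw in (2w)a + a(2w) is 2, a contradiction. *)

Section Coefficients.
Variables (R : comNzRingType) (G : groupType).

Lemma gcoef_nil g : gcoef ([::] : gelt R G) g = 0.
Proof. by rewrite /gcoef big_nil. Qed.

Lemma gcoef_cons (r : R) (h : G) (a : gelt R G) g :
  gcoef ((r, h) :: a) g = (if h == g then r else 0) + gcoef a g.
Proof. by rewrite /gcoef big_cons /=; case: (h == g); rewrite ?add0r. Qed.

Lemma gscale1 (a : gelt R G) : gscale 1 a = a.
Proof. by elim: a => //= [[r h] a ->]; rewrite mul1r. Qed.

End Coefficients.

Section Anticommutative.
Variables (R : comNzRingType) (G : groupType) (star : G -> G) (sigma : G -> R).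
Hypothesis hchar : (2%:R : R) != 0.
Hypothesis hstarM : forall x y : G, star (x * y)%g = (star y * star x)%g.
Hypothesis hstarK : forall x : G, star (star x) = x.
Hypothesis hsigM : forall x y : G, sigma (x * y)%g = sigma x * sigma y.
Hypothesis hsigU : forall x : G, exists u : R, sigma x * u = 1.
Hypothesis hcompat : forall x : G, sigma (x * star x)%g = 1.
Hypothesis hS : S_anticomm star sigma.

Lemma two_neq0 : (2%:R : R) <> 0.
Proof. by move/eqP; rewrite (negbTE hchar). Qed.

Lemma mulr_sigma_eq0 x (c : R) : c * sigma x = 0 -> c = 0.
Proof. by case: (hsigU x) => u hu h; rewrite -[c]mulr1 -hu mulrA h mul0r. Qed.

Lemma sigma_neq0 x : sigma x <> 0.
Proof.
move=> h; move/eqP: (oner_neq0 R); apply; apply: (mulr_sigma_eq0 (x := x)).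
by rewrite h mulr0.
Qed.

Lemma S_gen_in_S s : S_gen star sigma s -> in_S star sigma s.
Proof.
move=> hs; exists [:: (1, s)]; split; first by move=> p; rewrite inE => /eqP ->.
by move=> g; rewrite /= gscale1 cats0.
Qed.

Lemma S_gen_anticomm s t : S_gen star sigma s -> S_gen star sigma t ->
  forall g, gcoef (gadd (gmul s t) (gmul t s)) g = 0.
Proof. by move=> hs ht; apply: hS; apply: S_gen_in_S. Qed.

Definition S3_elt x : gelt R G := [:: (1, x); (sigma x, star x)].

Lemma S3_elt_gen x : ~ Gsym star x -> S_gen star sigma (S3_elt x).
Proof. by move=> hx; right; right; exists x. Qed.

Lemma S3_anticomm x y : ~ Gsym star x -> ~ Gsym star y -> forall g,
  gcoef (gadd (gmul (S3_elt x) (S3_elt y)) (gmul (S3_elt y) (S3_elt x))) g = 0.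
Proof. by move=> hx hy; apply: S_gen_anticomm; apply: S3_elt_gen. Qed.

Lemma S1_double_gen w : Gsym star w -> sigma w = 1 ->
  S_gen star sigma [:: (2%:R, w)].
Proof. by move=> h1 h2; left; exists w. Qed.

Lemma mul_star_neq x y : ~ Gsym star x -> ~ Gsym star y ->
  [/\ (x * y)%g <> (x * star y)%g, (x * y)%g <> (star x * y)%g,
      (x * star y)%g <> (star x * star y)%g
    & (star x * y)%g <> (star x * star y)%g].
Proof.
rewrite /Gsym => hx hy.
by split=> [/mulgI|/mulIg|/mulIg|/mulgI] h; [apply: hy|apply: hx|apply: hx|apply: hy].
Qed.

Lemma star_mul_eq x y :
  (x * y)%g = (star x * star y)%g <-> (star y * star x)%g = (y * x)%g.
Proof. by split=> e; have := congr1 star e; rewrite !hstarM !hstarK. Qed.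

(* [coef_at E g H] specializes the vanishing of all coefficients [E] at [g];
   [decide_eqs H] then evaluates every test [a == b] in [H] that [congruence]
   can settle from the (dis)equalities in the context. *)
Ltac decide_eqs H :=
  repeat match type of H with
  | context [?a == ?b] =>
      let e := fresh in
      first [ have e : a = b by congruence
            | have e : a <> b by congruence ];
      first [ rewrite (introT eqP e) in H | rewrite (introF eqP e) in H ];
      clear e
  end;
  rewrite /= ?mul1r ?mulr1 ?add0r ?addr0 in H.

Ltac coef_at E g H :=
  have H := E g;
  rewrite /gadd /gmul /S3_elt /= !gcoef_cons gcoef_nil in H; decide_eqs H.

Section SelfProducts.
Variable x : G.
Hypothesis hx : ~ Gsym star x.

Let E := S3_anticomm hx hx.

Lemma star_mulC : (star x * x)%g = (x * star x)%g.
Proof.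
have [n1 _ _ n2] := mul_star_neq hx hx.
case: ((star x * x)%g =P (x * star x)%g) => // ne; exfalso.
coef_at E (x * star x)%g H.
by apply: two_neq0; apply: (mulr_sigma_eq0 (x := x)); apply: (etrans _ H); ring.
Qed.

Lemma four_eq0 : (2%:R : R) * 2%:R = 0.
Proof.
have [n1 _ _ n2] := mul_star_neq hx hx; have c := star_mulC.
coef_at E (x * star x)%g H.
by apply: (mulr_sigma_eq0 (x := x)); apply: (etrans _ H); ring.
Qed.

Lemma star_sq : (star x * star x)%g = (x * x)%g.
Proof.
have [n1 n3 _ n2] := mul_star_neq hx hx; have c := star_mulC.
case: ((star x * star x)%g =P (x * x)%g) => // ne; exfalso.
coef_at E (x * x)%g H.
by apply: two_neq0; apply: (etrans _ H); ring.
Qed.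

End SelfProducts.

Lemma S2_double_gen w x : ~ Gsym star x -> Gsym star w -> sigma w = -1 ->
  S_gen star sigma [:: (2%:R, w)].
Proof.
move=> hx h1 h2; right; left; exists w, 2%:R.
have h22 : 1 - sigma w = 2%:R by rewrite h2 opprK mulr2n.
split=> //; split; last by rewrite h22 (four_eq0 hx).
rewrite /inN h2 => h; apply: two_neq0.
by rewrite mulr2n -{1}h addNr.
Qed.

Lemma noncentral_gen_eq0 al w x : S_gen star sigma [:: (al, w)] ->
  ~ Gsym star x -> (w * x)%g <> (x * w)%g -> (w * star x)%g <> (x * w)%g ->
  al = 0.
Proof.
move=> hw hx n1 n2; have n3 : (star x * w)%g <> (x * w)%g by move/mulIg.
coef_at (S_gen_anticomm hw (S3_elt_gen hx)) (x * w)%g H.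
by apply: (etrans _ H); ring.
Qed.

Section Pair.
Variables x y : G.
Hypotheses (hx : ~ Gsym star x) (hy : ~ Gsym star y).

Let E := S3_anticomm hx hy.

Lemma star_mul_eq_swap :
  (x * y)%g = (star x * star y)%g <-> (x * star y)%g = (star x * y)%g.
Proof.
have hxx := star_mulC hx; have hx2 := star_sq hx.
split=> e.
- have : (star x * (x * y))%g = (star x * (star x * star y))%g by rewrite e.
  by rewrite !mulgA hxx hx2 -!mulgA => /mulgI /esym.
- have : (x * (x * star y))%g = (x * (star x * y))%g by rewrite e.
  by rewrite !mulgA -hxx -hx2 -!mulgA => /mulgI.
Qed.

Section MulEqStarMul.
Hypothesis mul_eq : (x * y)%g = (star x * star y)%g.

Let rev_eq : (star y * star x)%g = (y * x)%g.
Proof. exact/star_mul_eq. Qed.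
Let swap_eq : (x * star y)%g = (star x * y)%g.
Proof. exact/star_mul_eq_swap. Qed.

Lemma lemma3p6_i : (y * x)%g = (x * y)%g ->
  [/\ (x * y)%g = (y * x)%g, (y * x)%g = (star x * star y)%g,
      (star x * star y)%g = (star y * star x)%g,
      2%:R * (1 + sigma (x * y)%g) = 0 & 2%:R * (sigma x + sigma y) = 0].
Proof.
move=> c; have [a1 a2 a3 a4] := mul_star_neq hx hy.
have [b1 b2 b3 b4] := mul_star_neq hy hx.
split; try congruence.
  by coef_at E (x * y)%g H; rewrite hsigM; apply: (etrans _ H); ring.
coef_at E (x * star y)%g H.
case: ((y * star x)%g =P (x * star y)%g) => e; decide_eqs H.
  by apply: (etrans _ H); ring.
have -> : sigma x + sigma y = 0 by apply: (etrans _ H); ring.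
by rewrite mulr0.
Qed.

Lemma lemma3p6_ii : (y * star x)%g = (x * y)%g ->
  [/\ (x * y)%g = (y * star x)%g, (y * star x)%g = (star y * x)%g,
      (star y * x)%g = (star x * star y)%g &
      1 + sigma x + sigma y + sigma (x * y)%g = 0].
Proof.
move=> d; have [a1 a2 a3 a4] := mul_star_neq hx hy.
have [b1 b2 b3 b4] := mul_star_neq hy hx.
split; try congruence.
by coef_at E (x * y)%g H; rewrite hsigM; apply: (etrans _ H); ring.
Qed.

Lemma lemma3p6_iii : (y * x)%g <> (x * y)%g -> (y * star x)%g <> (x * y)%g ->
  [/\ (x * y)%g = (star x * star y)%g, (star x * star y)%g <> (y * star x)%g,
      (y * star x)%g = (star y * x)%g, sigma (x * y)%g = -1 &
      sigma x = - sigma y].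
Proof.
move=> nc nd; have [a1 a2 a3 a4] := mul_star_neq hx hy.
have [b1 b2 b3 b4] := mul_star_neq hy hx.
have n5 : (x * star y)%g <> (y * star x)%g.
  move=> e; apply: nc.
  have : (x * star y * star x)%g = (y * star x * star x)%g by rewrite e.
  by rewrite -!mulgA rev_eq (star_sq hx) !mulgA => /mulIg /esym.
split; try congruence.
  apply/eqP; rewrite -addr_eq0; apply/eqP; rewrite hsigM.
  by coef_at E (x * y)%g H; apply: (etrans _ H); ring.
apply/eqP; rewrite -addr_eq0; apply/eqP.
by coef_at E (y * star x)%g H; apply: (etrans _ H); ring.
Qed.

End MulEqStarMul.

Section MulNeqStarMul.
Hypothesis mul_neq : (x * y)%g <> (star x * star y)%g.

Let rev_neq : (star y * star x)%g <> (y * x)%g.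
Proof. by move/star_mul_eq. Qed.
Let swap_neq : (x * star y)%g <> (star x * y)%g.
Proof. by move/star_mul_eq_swap. Qed.

Lemma mul_comm_absurd : (y * x)%g <> (x * y)%g.
Proof.
move=> c; have [a1 a2 a3 a4] := mul_star_neq hx hy.
have [b1 b2 b3 b4] := mul_star_neq hy hx.
by coef_at E (x * y)%g H; apply: two_neq0; apply: (etrans _ H); ring.
Qed.

Lemma starl_comm_absurd : sigma y <> -1 -> (star y * x)%g <> (x * y)%g.
Proof.
move=> hsy c; have [a1 a2 a3 a4] := mul_star_neq hx hy.
have [b1 b2 b3 b4] := mul_star_neq hy hx.
apply: hsy; apply/eqP; rewrite -addr_eq0; apply/eqP.
by coef_at E (x * y)%g H; apply: (etrans _ H); ring.
Qed.

Lemma star_comm_absurd : (star y * star x)%g <> (x * y)%g.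
Proof.
move=> c; have [a1 a2 a3 a4] := mul_star_neq hx hy.
have [b1 b2 b3 b4] := mul_star_neq hy hx.
have hw : Gsym star (x * y)%g by rewrite /Gsym hstarM.
have sw : sigma (x * y)%g = -1.
  apply/eqP; rewrite -addr_eq0; apply/eqP; rewrite hsigM.
  by coef_at E (x * y)%g H; apply: (etrans _ H); ring.
apply: two_neq0; apply: (noncentral_gen_eq0 (S2_double_gen hx hw sw) hx).
- by rewrite -mulgA => /mulgI e; apply: rev_neq; apply: etrans c (esym e).
- by rewrite -mulgA => /mulgI e; apply: b3; apply: etrans e (esym c).
Qed.

Lemma twisted_comm : sigma y <> -1 -> (y * star x)%g = (x * y)%g.
Proof.
move=> hsy; case: ((y * star x)%g =P (x * y)%g) => // nd; exfalso.
have nc := mul_comm_absurd; have nl := starl_comm_absurd hsy.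
have nr := star_comm_absurd; have [a1 a2 a3 a4] := mul_star_neq hx hy.
by coef_at E (x * y)%g H; move/eqP: (oner_neq0 R).
Qed.

Lemma twisted_absurd : (y * star x)%g = (x * y)%g ->
  (y * x)%g <> (star x * star y)%g.
Proof.
move=> d e; have [a1 a2 a3 a4] := mul_star_neq hx hy.
have [b1 b2 b3 b4] := mul_star_neq hy hx.
have d' : (x * star y)%g = (star y * star x)%g.
  by have := congr1 star d; rewrite !hstarM !hstarK.
have l : (star y * x)%g = (star x * y)%g.
  case: ((star y * x)%g =P (star x * y)%g) => // nl; exfalso.
  by coef_at E (star x * y)%g H; apply: (sigma_neq0 H).
have hw : Gsym star (y * star y)%g by rewrite /Gsym hstarM hstarK.
apply: two_neq0; apply: (noncentral_gen_eq0 (S1_double_gen hw (hcompat y)) hx).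
- by rewrite -mulgA l mulgA d -!mulgA => /mulgI /mulgI /esym.
- rewrite -mulgA -d' mulgA e -(star_mulC hy) -!mulgA (star_sq hy) !mulgA.
  by move=> /mulIg /esym.
Qed.

Lemma lemma3p6_iv : (y * star x)%g = (x * y)%g ->
  [/\ (x * y)%g = (y * star x)%g, (y * star x)%g <> (star x * star y)%g,
      (star x * star y)%g = (star y * x)%g & sigma x = -1].
Proof.
move=> d; have [a1 a2 a3 a4] := mul_star_neq hx hy.
have [b1 b2 b3 b4] := mul_star_neq hy hx; have nc := mul_comm_absurd.
have sx : sigma x = -1.
  apply/eqP; rewrite -addr_eq0; apply/eqP.
  by coef_at E (x * y)%g H; apply: (etrans _ H); ring.
have d' : (x * star y)%g = (star y * star x)%g.
  by have := congr1 star d; rewrite !hstarM !hstarK.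
coef_at E (y * x)%g H.
case: ((star x * y)%g =P (y * x)%g) => [l|nl].
  have r : (star x * star y)%g = (star y * x)%g.
    by have := congr1 star l; rewrite !hstarM !hstarK => /esym.
  by split; congruence.
case: ((star x * star y)%g =P (y * x)%g) => [r|nr].
  by case: (twisted_absurd d (esym r)).
by decide_eqs H; case/eqP: (oner_neq0 R).
Qed.

End MulNeqStarMul.

End Pair.

End Anticommutative.

Theorem lemma3p6 (R : comNzRingType) (G : groupType)
  (star : G -> G) (sigma : G -> R)
  (hchar : (2%:R : R) != 0)
  (hstarM : forall x y : G, star (x * y)%g = (star y * star x)%g)
  (hstarK : forall x : G, star (star x) = x)
  (hsigM : forall x y : G, sigma (x * y)%g = sigma x * sigma y)
  (hsig1 : sigma 1%g = 1)
  (hsigU : forall x : G, exists u : R, sigma x * u = 1)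
  (hsignt : exists x : G, sigma x != 1)
  (hcompat : forall x : G, sigma (x * star x)%g = 1)
  (hS : S_anticomm star sigma)
  (x y : G) (hx : ~ Gsym star x) (hy : ~ Gsym star y)
  (hsy : sigma y <> -1) :
  [/\ (x * y)%g = (y * x)%g, (y * x)%g = (star x * star y)%g,
      (star x * star y)%g = (star y * star x)%g,
      2%:R * (1 + sigma (x * y)%g) = 0 & 2%:R * (sigma x + sigma y) = 0]
  \/ [/\ (x * y)%g = (y * star x)%g, (y * star x)%g = (star y * x)%g,
        (star y * x)%g = (star x * star y)%g &
        1 + sigma x + sigma y + sigma (x * y)%g = 0]
  \/ [/\ (x * y)%g = (star x * star y)%g, (star x * star y)%g <> (y * star x)%g,
        (y * star x)%g = (star y * x)%g, sigma (x * y)%g = -1 &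
        sigma x = - sigma y]
  \/ [/\ (x * y)%g = (y * star x)%g, (y * star x)%g <> (star x * star y)%g,
        (star x * star y)%g = (star y * x)%g & sigma x = -1].
Proof.
case: ((x * y)%g =P (star x * star y)%g) => [e|ne].
- case: ((y * x)%g =P (x * y)%g) => [c|nc].
    by left; apply: lemma3p6_i.
  case: ((y * star x)%g =P (x * y)%g) => [d|nd].
    by right; left; apply: lemma3p6_ii.
  by right; right; left; apply: lemma3p6_iii.
- have d : (y * star x)%g = (x * y)%g by apply: (twisted_comm (sigma := sigma)).
  by right; right; right; apply: lemma3p6_iv.
Qed.
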